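(* Let $\gamma>0$, $A:=K+\gamma M$ and $A^{\rm aux}:=G^TAJ^{\rm grad}_{\varepsilon,\bm\beta}$ (a node-to-node grid operator). Then $A^{\rm aux}=\gamma L^{\rm grad}$, where $L^{\rm grad}$ is the node operator (the SAFE stencil for the scalar $H(\mathrm{grad})$ convection–diffusion problem) $$6(L^{\rm grad}f)_{\bm n}=4(\sigma_1+\sigma_2)f_{\bm n}+(\sigma_2-4B(-b_1))f_{\bm n+e_1}+(\sigma_2-4B(b_1))f_{\bm n-e_1}+(\sigma_1-4B(-b_2))f_{\bm n+e_2}+(\sigma_1-4B(b_2))f_{\bm n-e_2}$$ $$\quad-(B(-b_1)+B(-b_2))f_{\bm n+(1,1)}-(B(b_1)+B(-b_2))f_{\bm n+(-1,1)}-(B(-b_1)+B(b_2))f_{\bm n+(1,-1)}-(B(b_1)+B(b_2))f_{\bm n+(-1,-1)},$$ with $B=B_\varepsilon$. Equivalently, for every $\bm\theta\in\mathbb{R}^2$, $A^{\rm aux}\varphi(\bm\theta)_N=\gamma\cdot\tfrac23 D(\bm\theta)\varphi(\bm\theta)_N$ with $$D(\bm\theta)=(2+\tilde c_2)s_1^2\sigma_1+(2+\tilde c_1)s_2^2\sigma_2-\tfrac{i}{2}\tilde s_1b_1(2+\tilde c_2)-\tfrac{i}{2}\tilde s_2b_2(2+\tilde c_1),$$ and $\tfrac23D(\bm\theta)$ is also the Fourier symbol of $L^{\rm grad}$.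
   Context: Fix constants $\varepsilon>0$, $\bm{\beta}=(\beta_1,\beta_2)\in\mathbb{R}^2$, $h>0$, and set $b_j:=\beta_j h$. The Bernoulli function is $B_\varepsilon(s):=\varepsilon\big/\int_0^1 e^{sx/\varepsilon}\,dx$. Write $\sigma_j:=B_\varepsilon(b_j)+B_\varepsilon(-b_j)$, $s_j=\sin(\theta_j/2)$, $\tilde s_j=\sin\theta_j$, $\tilde c_j=\cos\theta_j$. Index sets: nodes $N=\mathbb{Z}^2$, horizontal edges $E_1=(\mathbb{Z}+\frac12)\times\mathbb{Z}$, vertical edges $E_2=\mathbb{Z}\times(\mathbb{Z}+\frac12)$, $E=E_1\cup E_2$; grid functions are complex-valued functions on these sets; $e_1=(1,0)$, $e_2=(0,1)$. $J^{\rm grad}_{\varepsilon,\bm\beta}$: $(J^{\rm grad}_{\varepsilon,\bm\beta}f)_{\bm k}=-B_\varepsilon(b_j)f_{\bm k-e_j/2}+B_\varepsilon(-b_j)f_{\bm k+e_j/2}$ for $\bm k\in E_j$. $G^T$ maps edge functions to node functions by $(G^Tg)_{\bm n}=\sum_{j=1}^2\big(g_{\bm n-e_j/2}-g_{\bm n+e_j/2}\big)$. The edge operator $K$ is defined, writing $B=B_\varepsilon$, by: for $\bm k\in E_1$, $h^2(Kf)_{\bm k}=\sigma_2f_{\bm k}-B(-b_2)f_{\bm k+e_2}-B(b_2)f_{\bm k-e_2}-B(b_1)f_{\bm k+(-\frac12,\frac12)}+B(-b_1)f_{\bm k+(\frac12,\frac12)}+B(b_1)f_{\bm k+(-\frac12,-\frac12)}-B(-b_1)f_{\bm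 k+(\frac12,-\frac12)}$; for $\bm k\in E_2$, $h^2(Kf)_{\bm k}=\sigma_1f_{\bm k}-B(b_1)f_{\bm k-e_1}-B(-b_1)f_{\bm k+e_1}-B(-b_2)f_{\bm k+(-\frac12,\frac12)}+B(-b_2)f_{\bm k+(\frac12,\frac12)}+B(b_2)f_{\bm k+(-\frac12,-\frac12)}-B(b_2)f_{\bm k+(\frac12,-\frac12)}$. The edge mass operator $M$: $(Mf)_{\bm k}=\frac23f_{\bm k}+\frac16(f_{\bm k+e_2}+f_{\bm k-e_2})$ for $\bm k\in E_1$, and $(Mf)_{\bm k}=\frac23f_{\bm k}+\frac16(f_{\bm k+e_1}+f_{\bm k-e_1})$ for $\bm k\in E_2$. Fourier modes: $\varphi(\bm\theta)_N(\bm k):=e^{i\bm\theta\cdot\bm k}$ for $\bm k\in N$. *)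

From Stdlib Require Import Reals ZArith.
From Coquelicot Require Import Coquelicot.
Open Scope R_scope.

Definition Bern (eps s : R) : R :=
  eps / RInt (fun x => exp (s * x / eps)) 0 1.

(* Edges E = E1 u E2 :
     E1 i j  encodes the horizontal edge (i + 1/2, j)  in (Z+1/2) x Z,
     E2 i j  encodes the vertical   edge (i, j + 1/2)  in Z x (Z+1/2). *)
Inductive edge : Type := E1 (i j : Z) | E2 (i j : Z).

Definition nodefun := Z -> Z -> C.
Definition edgefun := edge -> C.

Section Ops.
Variables (eps beta1 beta2 h : R).
Let b1 := beta1 * h.
Let b2 := beta2 * h.
Let B := Bern eps.
Definition sigma1 := B b1 + B (- b1).
Definition sigma2 := B b2 + B (- b2).

Definition Jgrad (f : nodefun) : edgefun := fun k =>
  match k with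
  | E1 i j => RtoC (- B b1) * f i j + RtoC (B (- b1)) * f (i + 1)%Z j
  | E2 i j => RtoC (- B b2) * f i j + RtoC (B (- b2)) * f i (j + 1)%Z
  end%C.

Definition GT (g : edgefun) : nodefun := fun i j =>
  (g (E1 (i - 1) j) - g (E1 i j) + (g (E2 i (j - 1)) - g (E2 i j)))%C.

Definition Kop (f : edgefun) : edgefun := fun k =>
  (RtoC (/ (h ^ 2)) *
  match k with
  | E1 i j =>
      RtoC sigma2 * f (E1 i j)
      - RtoC (B (- b2)) * f (E1 i (j + 1))
      - RtoC (B b2) * f (E1 i (j - 1))
      - RtoC (B b1) * f (E2 i j)
      + RtoC (B (- b1)) * f (E2 (i + 1) j)
      + RtoC (B b1) * f (E2 i (j - 1))
      - RtoC (B (- b1)) * f (E2 (i + 1) (j - 1))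
  | E2 i j =>
      RtoC sigma1 * f (E2 i j)
      - RtoC (B b1) * f (E2 (i - 1) j)
      - RtoC (B (- b1)) * f (E2 (i + 1) j)
      - RtoC (B (- b2)) * f (E1 (i - 1) (j + 1))
      + RtoC (B (- b2)) * f (E1 i (j + 1))
      + RtoC (B b2) * f (E1 (i - 1) j)
      - RtoC (B b2) * f (E1 i j)
  end)%C.

Definition Mop (f : edgefun) : edgefun := fun k =>
  match k with
  | E1 i j => RtoC (2/3) * f (E1 i j)
              + RtoC (1/6) * (f (E1 i (j + 1)) + f (E1 i (j - 1)))
  | E2 i j => RtoC (2/3) * f (E2 i j)
              + RtoC (1/6) * (f (E2 (i + 1) j) + f (E2 (i - 1) j))
  end%C.

Definition Aop (gamma : R) (f : edgefun) : edgefun := fun k =>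
  (Kop f k + RtoC gamma * Mop f k)%C.

Definition Aaux (gamma : R) (f : nodefun) : nodefun := GT (Aop gamma (Jgrad f)).

Definition Lgrad (f : nodefun) : nodefun := fun i j =>
  (RtoC (/ 6) *
   ( RtoC (4 * (sigma1 + sigma2)) * f i j
   + RtoC (sigma2 - 4 * B (- b1)) * f (i + 1)%Z j
   + RtoC (sigma2 - 4 * B b1) * f (i - 1)%Z j
   + RtoC (sigma1 - 4 * B (- b2)) * f i (j + 1)%Z
   + RtoC (sigma1 - 4 * B b2) * f i (j - 1)%Z
   - RtoC (B (- b1) + B (- b2)) * f (i + 1)%Z (j + 1)%Z
   - RtoC (B b1 + B (- b2)) * f (i - 1)%Z (j + 1)%Z
   - RtoC (B (- b1) + B b2) * f (i + 1)%Z (j - 1)%Z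
   - RtoC (B b1 + B b2) * f (i - 1)%Z (j - 1)%Z))%C.

Definition Dsym (th1 th2 : R) : C :=
  let s1 := sin (th1 / 2) in let s2 := sin (th2 / 2) in
  let st1 := sin th1 in let st2 := sin th2 in
  let c1 := cos th1 in let c2 := cos th2 in
  ( (2 + c2) * s1 ^ 2 * sigma1 + (2 + c1) * s2 ^ 2 * sigma2,
    - (1/2) * st1 * b1 * (2 + c2) - (1/2) * st2 * b2 * (2 + c1) ).
End Ops.

(* Fourier mode phi(theta)_N(n) = exp(i theta . n) = cos(theta.n) + i sin(theta.n) *)
Definition phi (th1 th2 : R) : nodefun := fun i j =>
  (cos (th1 * IZR i + th2 * IZR j), sin (th1 * IZR i + th2 * IZR j)).

(* G^T K J^grad vanishes identically for every choice of the parameters,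
   so A^aux = gamma G^T M J^grad, and expanding this composite stencil gives
   L^grad.  Fourier modes are eigenfunctions of every translation-invariant
   stencil; evaluating the symbol of L^grad only needs the Bernoulli identity
   B(-s) = B(s) + s, i.e. sigma_j = 2 B(b_j) + b_j. *)

From Stdlib Require Import Reals ZArith Lra.
From Coquelicot Require Import Coquelicot.
Open Scope R_scope.

Lemma RInt_exp_scaled (eps s : R) : eps <> 0 -> s <> 0 ->
  RInt (fun x => exp (s * x / eps)) 0 1 = eps / s * (exp (s / eps) - 1).
Proof.
intros Heps Hs.
apply is_RInt_unique.
replace (eps / s * (exp (s / eps) - 1)) with
  (minus (eps / s * exp (s * 1 / eps)) (eps / s * exp (s * 0 / eps))).
2:{ unfold minus, plus, opp; simpl.
    rewrite Rmult_0_r, Rdiv_0_l, exp_0, Rmult_1_r; ring. }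
apply (is_RInt_derive (fun x => eps / s * exp (s * x / eps))).
- intros x _; auto_derive; [easy |]; unfold Rdiv; field; lra.
- intros x _.
  apply (ex_derive_continuous (fun y => exp (s * y / eps))).
  auto_derive; easy.
Qed.

Lemma Bern_opp (eps s : R) : eps <> 0 -> Bern eps (- s) = Bern eps s + s.
Proof.
intros Heps.
destruct (Req_dec s 0) as [-> | Hs].
{ rewrite Ropp_0; ring. }
unfold Bern.
rewrite (RInt_exp_scaled eps s), (RInt_exp_scaled eps (- s)) by lra.
replace (- s / eps) with (- (s / eps)) by (field; lra).
rewrite exp_Ropp.
assert (Hexp_pos : 0 < exp (s / eps)) by apply exp_pos.
assert (Hexp_ne1 : exp (s / eps) <> 1).
{ rewrite <- exp_0; intros Hexp%exp_inv.
  apply Hs; apply (Rmult_eq_reg_r (/ eps)); [| now apply Rinv_neq_0_compat].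
  unfold Rdiv in Hexp; rewrite Hexp; ring. }
field; repeat split; lra.
Qed.

Lemma GT_Kop_Jgrad (eps beta1 beta2 h : R) (f : nodefun) (i j : Z) :
  GT (Kop eps beta1 beta2 h (Jgrad eps beta1 beta2 h f)) i j = 0%C.
Proof.
unfold GT, Kop, Jgrad, sigma1, sigma2.
repeat rewrite ?Z.sub_add, ?Z.add_simpl_r.
apply injective_projections; simpl; ring.
Qed.

Lemma GT_Mop_Jgrad (eps beta1 beta2 h : R) (f : nodefun) (i j : Z) :
  GT (Mop (Jgrad eps beta1 beta2 h f)) i j = Lgrad eps beta1 beta2 h f i j.
Proof.
unfold GT, Mop, Jgrad, Lgrad, sigma1, sigma2.
repeat rewrite ?Z.sub_add, ?Z.add_simpl_r.
apply injective_projections; simpl; field.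
Qed.

Lemma GT_Aop (eps beta1 beta2 h gamma : R) (g : edgefun) (i j : Z) :
  GT (Aop eps beta1 beta2 h gamma g) i j
  = (GT (Kop eps beta1 beta2 h g) i j + RtoC gamma * GT (Mop g) i j)%C.
Proof. unfold GT, Aop; ring. Qed.

Lemma Aaux_Lgrad (eps beta1 beta2 h gamma : R) (f : nodefun) (i j : Z) :
  Aaux eps beta1 beta2 h gamma f i j
  = (RtoC gamma * Lgrad eps beta1 beta2 h f i j)%C.
Proof.
unfold Aaux; rewrite GT_Aop, GT_Kop_Jgrad, GT_Mop_Jgrad; ring.
Qed.

Definition cexp (t : R) : C := (cos t, sin t).

Lemma cexp_add (s t : R) : cexp (s + t) = (cexp s * cexp t)%C.
Proof.
unfold cexp; rewrite cos_plus, sin_plus.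
apply injective_projections; simpl; ring.
Qed.

Lemma phi_cexp (th1 th2 : R) (i j : Z) :
  phi th1 th2 i j = cexp (th1 * IZR i + th2 * IZR j).
Proof. reflexivity. Qed.

Lemma phi_shift1 (th1 th2 : R) (i p j : Z) :
  phi th1 th2 (i + p)%Z j = (cexp (th1 * IZR p) * phi th1 th2 i j)%C.
Proof. rewrite !phi_cexp, plus_IZR, <- cexp_add; f_equal; ring. Qed.

Lemma phi_shift2 (th1 th2 : R) (i j q : Z) :
  phi th1 th2 i (j + q)%Z = (cexp (th2 * IZR q) * phi th1 th2 i j)%C.
Proof. rewrite !phi_cexp, plus_IZR, <- cexp_add; f_equal; ring. Qed.

Lemma sin_half_sqr (t : R) : sin (t / 2) ^ 2 = (1 - cos t) / 2.
Proof.
replace t with (2 * (t / 2)) at 2 by field.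
rewrite cos_2a_sin; field.
Qed.

Lemma Lgrad_phi (eps beta1 beta2 h : R) (th1 th2 : R) (i j : Z) : eps <> 0 ->
  Lgrad eps beta1 beta2 h (phi th1 th2) i j
  = (RtoC (2/3) * Dsym eps beta1 beta2 h th1 th2 * phi th1 th2 i j)%C.
Proof.
intros Heps.
unfold Lgrad, Z.sub; simpl Z.opp.
rewrite !phi_shift2, !phi_shift1, !Rmult_1_r.
replace (th1 * -1) with (- th1) by ring.
replace (th2 * -1) with (- th2) by ring.
destruct (phi th1 th2 i j) as [pr pi].
unfold Dsym, cexp, sigma1, sigma2.
rewrite !Bern_opp, !cos_neg, !sin_neg, !sin_half_sqr by exact Heps.
apply injective_projections; simpl; field.
Qed.

Theorem theorem4p2 (eps beta1 beta2 h gamma : R)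
  (Heps : 0 < eps) (Hh : 0 < h) (Hgamma : 0 < gamma) :
  (forall (f : nodefun) (i j : Z),
     Aaux eps beta1 beta2 h gamma f i j
     = (RtoC gamma * Lgrad eps beta1 beta2 h f i j)%C)
  /\
  (forall (th1 th2 : R) (i j : Z),
     Aaux eps beta1 beta2 h gamma (phi th1 th2) i j
     = (RtoC gamma * (RtoC (2/3) * Dsym eps beta1 beta2 h th1 th2)
        * phi th1 th2 i j)%C)
  /\
  (forall (th1 th2 : R) (i j : Z),
     Lgrad eps beta1 beta2 h (phi th1 th2) i j
     = (RtoC (2/3) * Dsym eps beta1 beta2 h th1 th2 * phi th1 th2 i j)%C).
Proof.
assert (Heps0 : eps <> 0) by lra.
split; [| split]; intros.
- apply Aaux_Lgrad.
- rewrite Aaux_Lgrad, Lgrad_phi by exact Heps0; ring.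
- now apply Lgrad_phi.
Qed.
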